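(* Let $p$ be a prime, $k,t\ge0$ integers, and $a,b,h$ integers with $\gcd(ab,p)=1$. Then $|R^\ast_{p^t,b}(p^k,a,h)|\le\gcd(h,p^k)$.
   Context: $e(z)=e^{2\pi iz}$. For positive integers $q,W$ and integers $a,b,h$, $R^\ast_{W,b}(q,a,h)=\sum_{1\le c\le qW,\ \gcd(c,q)=1,\ c\equiv b\ (\mathrm{mod}\ W)}e\big(\frac{ach}{qW}\big)$. Here $\gcd(0,n)=n$. *)

From HB Require Import structures.
From mathcomp Require Import all_boot all_order all_algebra.
From mathcomp Require Import complex.
From mathcomp Require Import reals trigo.
Set Implicit Arguments. Unset Strict Implicit. Unset Printing Implicit Defensive.
Import Order.TTheory GRing.Theory Num.Theory.
Local Open Scope ring_scope.
Local Open Scope complex_scope.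

Definition e_ (R : realType) (x : R) : R[i] :=
  (cos (2 * pi * x))%:C + 'i * (sin (2 * pi * x))%:C.

Definition Rstar (R : realType) (q W : nat) (a b h : int) : R[i] :=
  \sum_(1 <= c < (q * W).+1 | coprime c q && ((c%:Z == b %[mod W%:Z])%Z))
     e_ ((a * c%:Z * h)%:~R / (q * W)%:R).

From HB Require Import structures.
From mathcomp Require Import all_boot all_order all_algebra.
From mathcomp Require Import complex.
From mathcomp Require Import reals trigo.
From mathcomp Require Import ring lra zify.
Import Order.TTheory GRing.Theory Num.Theory.
Local Open Scope ring_scope.

(* With z = e(ah/(p^k p^t)), a root of unity of order dividing p^(k+t), the
   sum R^* is a sum of powers z^c over 0 <= c < p^k p^t.  When t > 0 (or
   k = 0) the congruence c = b (mod p^t) already makes c prime to p, so c runs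
   over a progression j p^t + r and the sum is z^r times a geometric sum, equal
   to p^k if z^(p^t) = 1 and to 0 otherwise.  When t = 0 it is the Ramanujan
   sum [z = 1] p^k - [z^p = 1] p^(k-1).  A nonzero term z^(p^j) = 1 means that
   p^(k+t-j) divides ah, hence h as p does not divide a, so every surviving
   term is bounded by gcd(h, p^k). *)

Lemma big_nat_shift1 (V : nmodType) (G : nat -> V) n : G n = G 0%N ->
  \sum_(1 <= c < n.+1) G c = \sum_(0 <= c < n) G c.
Proof.
case: n => [|n] Gn; first by rewrite !big_geq.
by rewrite big_add1 /= big_nat_recr //= big_nat_recl //= Gn addrC.
Qed.

Lemma big_nat_modn_eq (V : nmodType) (F : nat -> V) n w r : (r < w)%N ->
  \sum_(0 <= c < n * w | (c %% w)%N == r) F c = \sum_(0 <= j < n) F (j * w + r)%N.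
Proof.
move=> rw; elim: n => [|n IHn]; first by rewrite !big_geq.
rewrite big_nat_recr //= -IHn mulSnr (big_cat_nat (n := n * w)) ?leq_addr //=.
congr (_ + _); rewrite -{1}[(n * w)%N]add0n big_addn addKn big_nat_cond.
rewrite (eq_bigl (eq_op^~ r)) => [|i]; first by rewrite big_nat1_eq rw addnC.
rewrite addnC modnMDl; case: ltnP => [/modn_small -> | wi] //=.
by rewrite gtn_eqF ?(leq_trans rw).
Qed.

Section RootOfUnitySums.
Variable F : idomainType.
Implicit Types z u : F.

Lemma sum_expr_root1 u n : u ^+ n = 1 ->
  \sum_(j < n) u ^+ j = if u == 1 then n%:R else 0.
Proof.
move=> un1; have [->|u_neq1] := eqVneq u 1.
  by under eq_bigr do rewrite expr1n; rewrite sumr_const card_ord.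
apply/eqP; have := subrX1 u n; rewrite un1 subrr => /esym/eqP.
by rewrite mulf_eq0 subr_eq0 (negbTE u_neq1).
Qed.

Lemma sum_expr_modn_eq z n w r : (r < w)%N -> z ^+ (n * w) = 1 ->
  \sum_(0 <= c < n * w | (c %% w)%N == r) z ^+ c
    = z ^+ r * (if z ^+ w == 1 then n%:R else 0).
Proof.
move=> rw znw; rewrite big_nat_modn_eq // big_mkord.
under eq_bigr do rewrite exprD mulnC exprM.
by rewrite -mulr_suml mulrC sum_expr_root1 // -exprM mulnC.
Qed.

Lemma sum_expr_coprime z p k : prime p -> z ^+ (p ^ k.+1) = 1 ->
  \sum_(0 <= c < p ^ k.+1 | coprime c p) z ^+ c
    = (if z == 1 then (p ^ k.+1)%:R else 0)
      - (if z ^+ p == 1 then (p ^ k)%:R else 0).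
Proof.
move=> pp zpk; rewrite (eq_bigl (fun c => ~~ (p %| c)%N)) => [|c]; last first.
  by rewrite coprime_sym prime_coprime.
have sum_all : \sum_(0 <= c < p ^ k.+1) z ^+ c
    = if z == 1 then (p ^ k.+1)%:R else 0 by rewrite big_mkord sum_expr_root1.
have sum_dvd : \sum_(0 <= c < p ^ k.+1 | (p %| c)%N) z ^+ c
    = if z ^+ p == 1 then (p ^ k)%:R else 0.
  rewrite (eq_bigl (fun c => (c %% p)%N == 0%N)) // expnSr.
  by rewrite sum_expr_modn_eq ?prime_gt0 -?expnSr // mul1r.
by rewrite -sum_all -sum_dvd [in RHS](bigID (fun c => p %| c)%N) /= addrC addrK.
Qed.
End RootOfUnitySums.

Section NormBounds.
Variable C : numDomainType.
Implicit Types z : C.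

Lemma norm_sum_expr_modn_eq_le z n w r g : (r < w)%N -> (0 < n)%N ->
  z ^+ (n * w) = 1 -> (z ^+ w = 1 -> (n <= g)%N) ->
  `|\sum_(0 <= c < n * w | (c %% w)%N == r) z ^+ c| <= g%:R.
Proof.
move=> rw n0 znw wg; rewrite sum_expr_modn_eq // normrM normrX.
have -> : `|z| = 1.
  apply/eqP; rewrite -(@pexpr_eq1 _ _ (n * w)) ?muln_gt0 ?n0 ?(leq_ltn_trans _ rw) //.
  by rewrite -normrX znw normr1.
rewrite expr1n mul1r; case: eqP => [/wg ng | _]; last by rewrite normr0.
by rewrite normr_nat ler_nat.
Qed.

Lemma norm_sum_expr_coprime_le z p k g : prime p -> z ^+ (p ^ k.+1) = 1 ->
  (z = 1 -> (p ^ k.+1 <= g)%N) -> (z ^+ p = 1 -> (p ^ k <= g)%N) ->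
  `|\sum_(0 <= c < p ^ k.+1 | coprime c p) z ^+ c| <= g%:R.
Proof.
move=> pp zpk z1g zpg; rewrite sum_expr_coprime //.
have [z1|_] := eqVneq z 1.
  rewrite z1 expr1n eqxx -natrB ?expnS ?leq_pmull ?prime_gt0 //.
  by rewrite normr_nat ler_nat -expnS (leq_trans (leq_subr _ _)) ?z1g.
have [/zpg pkg|_] := eqVneq (z ^+ p) 1; last by rewrite subrr normr0.
by rewrite sub0r normrN normr_nat ler_nat.
Qed.

End NormBounds.

Section Exponential.
Variable R : realType.
Implicit Types x y : R.
Local Open Scope complex_scope.

Lemma eD x y : e_ (x + y) = e_ x * e_ y.
Proof. by rewrite /e_ mulrDr cosD sinD; simpc; congr (_ +i* _); ring. Qed.

Lemma e0 : e_ (0 : R) = 1.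
Proof. by rewrite /e_ mulr0 cos0 sin0 mulr0 addr0. Qed.

Lemma eM_natl n x : e_ (n%:R * x) = e_ x ^+ n.
Proof.
elim: n => [|n IHn]; first by rewrite mul0r e0.
by rewrite -natr1 mulrDl mul1r eD IHn exprSr.
Qed.

Lemma e_nat n : e_ (n%:R : R) = 1.
Proof.
have e1 : e_ (1 : R) = 1.
  by rewrite /e_ mulr1 mulr_natl cos2pi sin2pi mulr0 addr0.
by rewrite -[n%:R]mulr1 eM_natl e1 expr1n.
Qed.

Lemma e_int (m : int) : e_ (m%:~R : R) = 1.
Proof.
case: m => n; first exact: e_nat.
by rewrite NegzE mulrNz -pmulrn -[LHS]mulr1 -[X in _ * X](e_nat n.+1) -eD addNr e0.
Qed.

Lemma cos_2pi_neq1 y : 0 < y < 1 -> cos (2 * pi * y) != 1.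
Proof.
move=> /andP[y_gt0 y_lt1]; apply/eqP.
(* cos (2 pi y) = 1 forces sin (pi y) = 0, impossible for 0 < pi y < pi. *)
rewrite -mulrA mulr_natl cos_mulr2n => cos2.
have : 0 < sin (pi * y) by rewrite sin_gt0_pi // mulr_gt0 ?pi_gt0 ?gtr_pMr ?pi_gt0.
have := cos2Dsin2 (pi * y); nra.
Qed.

Lemma e_eq1_dvdz (m : int) N : (0 < N)%N -> e_ (m%:~R / N%:R : R) = 1 -> (N%:Z %| m)%Z.
Proof.
move=> N_gt0 em; apply/dvdz_mod0P; set s := (m %% N)%Z.
have N_neq0 : (N%:R : R) != 0 by rewrite pnatr_eq0 -lt0n.
have es : e_ (s%:~R / N%:R : R) = 1.
  move: em; rewrite {1}(divz_eq m N) intrD intrM mulrDl -pmulrn mulfK //.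
  by rewrite eD e_int mul1r.
have s_ge0 : 0 <= s by rewrite modz_ge0 // eqz_nat -lt0n.
have s_ltN : s < N by rewrite ltz_pmod // ltz_nat.
apply: contra_eq es => s_neq0; apply/eqP.
move/(congr1 (@complex.Re R)); rewrite /e_; simpc; apply/eqP.
have s_gt0 : 0 < s by rewrite lt_def s_neq0.
apply: cos_2pi_neq1; rewrite divr_gt0 ?ltr0n ?ltr0z //=.
by rewrite ltr_pdivrMr ?ltr0n // mul1r pmulrn ltr_int.
Qed.

Lemma e_div_exprn (m : int) N : e_ (m%:~R / N%:R : R) ^+ N = 1.
Proof.
have [->|N_gt0] := posnP N; first exact: expr0.
by rewrite -eM_natl mulrC divfK ?e_int // pnatr_eq0 -lt0n.
Qed.

Lemma e_div_pexpn_eq1 (p n j : nat) (a h : int) : prime p -> coprime `|a| p ->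
  e_ ((a * h)%:~R / (p ^ (n + j))%:R : R) ^+ (p ^ j) = 1 -> (p ^ n %| `|h|)%N.
Proof.
move=> pp ap; have pX_neq0 i : ((p ^ i)%:R : R) != 0.
  by rewrite pnatr_eq0 -lt0n expn_gt0 prime_gt0.
rewrite -eM_natl expnD natrM.
have -> : (p ^ j)%:R * ((a * h)%:~R / ((p ^ n)%:R * (p ^ j)%:R))
    = (a * h)%:~R / (p ^ n)%:R :> R by field; rewrite !pX_neq0.
move/e_eq1_dvdz; rewrite expn_gt0 prime_gt0 // => /(_ isT).
by rewrite Gauss_dvdzr // coprimezE absz_nat coprimeXl // coprime_sym.
Qed.

Lemma Rstar_sum_expr q W a b h : Rstar R q W a b h =
  \sum_(0 <= c < q * W | coprime c q && (c%:Z == b %[mod W])%Z)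
    e_ ((a * h)%:~R / (q * W)%:R) ^+ c.
Proof.
rewrite /Rstar; under eq_bigr => c _.
  rewrite mulrAC intrM -pmulrn mulrAC mulrC eM_natl.
  over.
rewrite big_mkcond big_nat_shift1 -?big_mkcond //= e_div_exprn expr0.
by rewrite /coprime gcdnC gcdnMr gcd0n PoszM modzMl mod0z.
Qed.

End Exponential.

Arguments e_div_pexpn_eq1 {R p n j a h}.

Lemma eqz_mod_nat (c w : nat) (b : int) : (0 < w)%N ->
  (c%:Z == b %[mod w])%Z = ((c %% w)%N == `|(b %% w)%Z|%N).
Proof.
by move=> w_gt0; rewrite modz_nat -[(b %% w)%Z]gez0_abs ?modz_ge0 ?eqz_nat -?lt0n.
Qed.

Lemma coprime_eqz_mod (c d w : nat) (b : int) : (d %| w)%N ->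
  (c%:Z == b %[mod w])%Z -> coprime c d = coprime `|b| d.
Proof.
move=> dw cb; have cbd : (c%:Z == b %[mod d])%Z.
  by rewrite eqz_mod_dvd (dvdz_trans _ (_ : (w%:Z %| c%:Z - b)%Z)) -?eqz_mod_dvd.
have := congr1 (gcdz^~ d) (eqP cbd); rewrite !gcdz_modl.
by rewrite /coprime /gcdz !absz_nat => [[->]].
Qed.

Theorem lemma2p10 (R : realType) (p k t : nat) (a b h : int) :
  prime p -> coprimez (a * b) p%:Z ->
  `| Rstar R (p ^ k) (p ^ t) a b h | <= ((gcdz h (p ^ k)%:Z)%:~R : R[i]).
Proof.
move=> pp; rewrite coprimezE abszM absz_nat coprimeMl => /andP[ap bp].
have p_gt0 := prime_gt0 pp.
rewrite Rstar_sum_expr /gcdz absz_nat -pmulrn.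
set z := e_ _; have zN : z ^+ (p ^ k * p ^ t) = 1 by exact: e_div_exprn.
have gcd_ge n j : (n <= k)%N -> (n + j = k + t)%N -> z ^+ (p ^ j) = 1 ->
    (p ^ n <= gcdn `|h| (p ^ k))%N.
  rewrite /z -expnD => nk <- /(e_div_pexpn_eq1 pp ap) pnh.
  by rewrite dvdn_leq ?gcdn_gt0 ?expn_gt0 ?p_gt0 ?orbT // dvdn_gcd pnh dvdn_exp2l.
have [[t0 k_gt0] | kt] : (t = 0 /\ 0 < k)%N \/ (k = 0 \/ 0 < t)%N by lia.
- have [k' k_eq] : exists k', k = k'.+1 by exists k.-1; rewrite prednK.
  clearbody z; subst t k; rewrite expn0 muln1 in zN *.
  rewrite (eq_bigl (fun c => coprime c p)) => [|c]; last first.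
    by rewrite coprime_pexpr // !modz1 andbT.
  apply: norm_sum_expr_coprime_le => // [z1 | zp].
    by apply: (gcd_ge _ 0); rewrite // expn0 expr1.
  by apply: (gcd_ge _ 1); rewrite ?addn1 ?addn0 ?expn1.
- have pt_gt0 : (0 < p ^ t)%N by rewrite expn_gt0 p_gt0.
  set r := `|(b %% (p ^ t)%:Z)%Z|%N.
  have r_lt : (r < p ^ t)%N.
    by rewrite -ltz_nat gez0_abs ?modz_ge0 ?ltz_pmod -?lt0n.
  rewrite (eq_bigl (fun c => (c %% p ^ t)%N == r)) => [|c].
    apply: norm_sum_expr_modn_eq_le => // [|zt]; first by rewrite expn_gt0 p_gt0.
    exact: gcd_ge.
  rewrite -eqz_mod_nat //.
  case cb: (_ == _ %[mod _])%Z; rewrite ?andbF //= andbT.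
  case: kt => [k0 | t_gt0]; first by rewrite k0 expn0 coprimen1.
  by rewrite coprimeXr // (@coprime_eqz_mod c p (p ^ t) b) // dvdn_exp.
Qed.
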